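(* Let $\eta>0$ and let $\{\mathbf{x}_j\}_{j=1}^m\subseteq\mathcal{X}_d$ be a finite set of points with $\|\mathbf{x}_i-\mathbf{x}_j\|_2\ge\eta$ for all $i\ne j$. Then for each $j\in[m]$ there exists a unit vector $\mathbf{v}_j\in\mathbb{R}^{2d}$ such that $\mathbf{v}_j^\top\mathbf{x}_j=\sqrt2$ and $\mathbf{x}_j$ is the only point of $\{\mathbf{x}_i\}_{i=1}^m$ contained in $T_j:=\{\mathbf{x}\in\mathbb{R}^{2d}:|\mathbf{v}_j^\top\mathbf{x}-\sqrt2|<\frac{\eta^2}{2\sqrt2}\}$.
   Context: $\mathcal{X}_d=\mathbb{S}^{d-1}\times\mathbb{S}^{d-1}\subset\mathbb{R}^{2d}$. *)

From mathcomp Require Import all_boot all_order all_algebra.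
From mathcomp Require Import reals.
Set Implicit Arguments. Unset Strict Implicit. Unset Printing Implicit Defensive.
Import Order.TTheory GRing.Theory Num.Theory.
Local Open Scope ring_scope.

Definition dotv (R : realType) (n : nat) (u v : 'rV[R]_n) : R :=
  \sum_(i < n) u 0 i * v 0 i.

Definition norm2 (R : realType) (n : nat) (u : 'rV[R]_n) : R :=
  Num.sqrt (dotv u u).

Definition on_sphere (R : realType) (n : nat) (u : 'rV[R]_n) : Prop :=
  norm2 u = 1.

(* X_d = S^{d-1} x S^{d-1} inside R^{2d} = R^{d+d}: first d and last d
   coordinates are both unit vectors. *)
Definition in_Xd (R : realType) (d : nat) (x : 'rV[R]_(d + d)) : Prop :=
  on_sphere (lsubmx x) /\ on_sphere (rsubmx x).

(* Take v_j = x_j / sqrt 2.  Every point of X_d has norm sqrt 2, so expanding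
   ||x_i - x_j||^2 = 4 - 2 x_i.x_j gives
     v_j.x_i - sqrt 2 = - ||x_i - x_j||^2 / (2 sqrt 2).
   Hence x_i lies in the slab T_j exactly when ||x_i - x_j|| < eta, which the
   separation hypothesis forbids unless i = j. *)
From mathcomp Require Import all_boot all_order all_algebra.
From mathcomp Require Import reals.
From mathcomp Require Import ring.
Import Order.TTheory GRing.Theory Num.Theory.
Local Open Scope ring_scope.

Set Implicit Arguments.

Section InnerProduct.
Variables (R : realType) (n : nat).
Implicit Types (u v w : 'rV[R]_n) (r eta : R).

Lemma dotvC u v : dotv u v = dotv v u.
Proof. by apply: eq_bigr => i _; rewrite mulrC. Qed.

Lemma dotvBl u w v : dotv (u - w) v = dotv u v - dotv w v.
Proof. by rewrite /dotv -sumrB; apply: eq_bigr => i _; rewrite !mxE mulrBl. Qed.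

Lemma dotvBr v u w : dotv v (u - w) = dotv v u - dotv v w.
Proof. by rewrite dotvC dotvBl dotvC [dotv w v]dotvC. Qed.

Lemma dotvZl r u v : dotv (r *: u) v = r * dotv u v.
Proof. by rewrite /dotv mulr_sumr; apply: eq_bigr => i _; rewrite !mxE mulrA. Qed.

Lemma dotvZr r u v : dotv u (r *: v) = r * dotv u v.
Proof. by rewrite dotvC dotvZl dotvC. Qed.

Lemma dotvv_ge0 u : 0 <= dotv u u.
Proof. by apply: sumr_ge0 => i _; rewrite -expr2 sqr_ge0. Qed.

Lemma norm2_0 : norm2 (0 : 'rV[R]_n) = 0.
Proof. by rewrite /norm2 /dotv big1 ?sqrtr0 // => i _; rewrite mxE mul0r. Qed.

Lemma norm2_ge0 u : 0 <= norm2 u.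
Proof. exact: sqrtr_ge0. Qed.

Lemma sqr_norm2 u : norm2 u ^+ 2 = dotv u u.
Proof. exact/sqr_sqrtr/dotvv_ge0. Qed.

Lemma sqr_norm2B u w : norm2 (u - w) ^+ 2 = dotv u u - 2 * dotv u w + dotv w w.
Proof. by rewrite sqr_norm2 dotvBl !dotvBr [dotv w u]dotvC; ring. Qed.

Lemma dotvv_sphere u : on_sphere u -> dotv u u = 1.
Proof. by rewrite -sqr_norm2 => ->; rewrite expr1n. Qed.

Lemma norm2_normalize r w : 0 < r -> dotv w w = r ^+ 2 -> norm2 (r^-1 *: w) = 1.
Proof.
move=> r_gt0 ww; rewrite /norm2 dotvZl dotvZr ww mulrA -expr2 -exprMn.
by rewrite mulVf ?gt_eqF // expr1n sqrtr1.
Qed.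

Lemma normalized_dotv_gap r u w : 0 < r ->
  dotv u u = r ^+ 2 -> dotv w w = r ^+ 2 ->
  dotv (r^-1 *: w) u - r = - (norm2 (u - w) ^+ 2 / (2 * r)).
Proof.
move=> r_gt0 uu ww; rewrite dotvZl sqr_norm2B uu ww dotvC.
by field; rewrite gt_eqF.
Qed.

Lemma normalized_dotv_gap_lt r eta u w : 0 < r -> 0 <= eta ->
  dotv u u = r ^+ 2 -> dotv w w = r ^+ 2 ->
  (`|dotv (r^-1 *: w) u - r| < eta ^+ 2 / (2 * r)) = (norm2 (u - w) < eta).
Proof.
move=> r_gt0 eta_ge0 uu ww.
have r2_gt0 : 0 < 2 * r by rewrite mulr_gt0.
rewrite normalized_dotv_gap // normrN ger0_norm ?divr_ge0 ?sqr_ge0 ?ltW //.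
by rewrite ltr_pM2r ?invr_gt0 // ltr_pXn2r // nnegrE ?norm2_ge0.
Qed.

End InnerProduct.

Lemma dotv_lrsubmx (R : realType) (n1 n2 : nat) (x y : 'rV[R]_(n1 + n2)) :
  dotv x y = dotv (lsubmx x) (lsubmx y) + dotv (rsubmx x) (rsubmx y).
Proof.
by rewrite /dotv big_split_ord; congr (_ + _); apply: eq_bigr => i _; rewrite !mxE.
Qed.

Lemma dotvv_Xd (R : realType) (d : nat) (x : 'rV[R]_(d + d)) :
  in_Xd x -> dotv x x = Num.sqrt 2 ^+ 2.
Proof. by case=> lx rx; rewrite dotv_lrsubmx !dotvv_sphere // sqr_sqrtr. Qed.

Theorem lemma17 (R : realType) (d m : nat) (eta : R) (x : 'I_m -> 'rV[R]_(d + d)) :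
  0 < eta ->
  (forall j, in_Xd (x j)) ->
  (forall i j, i != j -> eta <= norm2 (x i - x j)) ->
  forall j : 'I_m, exists v : 'rV[R]_(d + d),
    [/\ norm2 v = 1,
        dotv v (x j) = Num.sqrt 2,
        `|dotv v (x j) - Num.sqrt 2| < eta ^+ 2 / (2 * Num.sqrt 2) &
        forall i : 'I_m,
          `|dotv v (x i) - Num.sqrt 2| < eta ^+ 2 / (2 * Num.sqrt 2) -> x i = x j].
Proof.
move=> eta_gt0 xXd xsep j.
have s_gt0 : 0 < Num.sqrt 2 :> R by rewrite sqrtr_gt0.
have xx k := dotvv_Xd (xXd k).
have in_slab_iff_near i := normalized_dotv_gap_lt _ _ s_gt0 (ltW eta_gt0) (xx i) (xx j).
exists ((Num.sqrt 2)^-1 *: x j); split.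
- exact: norm2_normalize.
- by rewrite dotvZl xx expr2 mulKf ?gt_eqF.
- by rewrite in_slab_iff_near subrr norm2_0.
- move=> i; rewrite in_slab_iff_near; case: (eqVneq i j) => [-> // | neq_ij].
  by rewrite ltNge xsep.
Qed.
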